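(* Let $\operatorname{R}_3=\{a_0,a_1,a_2\}$ be the dihedral quandle of order $3$, with $a_ia_j=a_{2j-i \pmod 3}$. Then the set of non-zero idempotents of $\mathbb{Z}[\operatorname{R}_3]$ is $I(\mathbb{Z}[\operatorname{R}_3])=\{a_0,a_1,a_2\}$.
   Context: For a quandle $Q$, the quandle ring $\mathbb{Z}[Q]$ is the free abelian group with basis $Q$, with multiplication $\big(\sum_i\alpha_i q_i\big)\big(\sum_j\beta_j q_j\big)=\sum_{i,j}\alpha_i\beta_j (q_iq_j)$. $I(\mathbb{Z}[Q])$ denotes the set of non-zero elements $w$ with $w^2=w$. *)

From mathcomp Require Import all_boot all_order all_algebra.
Set Implicit Arguments. Unset Strict Implicit. Unset Printing Implicit Defensive.
Import GRing.Theory.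
Local Open Scope ring_scope.

Notation R3 := 'I_3.
Definition r3op (i j : R3) : R3 := inord ((2 * j + 2 * i) %% 3)%N.
(* note: -i = 2i mod 3, so 2j - i = 2j + 2i mod 3 *)

(* Quandle ring Z[R_3]: elements are finitely supported Z-combinations,
   represented as functions R3 -> int (coefficient of a_i). *)
Notation ZR3 := {ffun 'I_3 -> int}.

Definition basis (i : R3) : ZR3 := [ffun k => (k == i)%:R].

Definition qmul (u v : ZR3) : ZR3 :=
  [ffun k => \sum_(i : R3) \sum_(j : R3) u i * v j * basis (r3op i j) k].

Definition idempotentsR3 : ZR3 -> Prop := fun w => w != 0 /\ qmul w w = w.

From mathcomp Require Import all_boot all_order all_algebra zify ring.
Set Implicit Arguments.
Unset Strict Implicit.
Unset Printing Implicit Defensive.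

Import Order.TTheory GRing.Theory Num.Theory.
Local Open Scope ring_scope.

(* Writing w = x a_0 + y a_1 + z a_2, the equation w^2 = w reads
   x = x^2 + 2yz, y = y^2 + 2zx, z = z^2 + 2xy.  Since u <= u^2 for every
   integer u, the three products yz, zx, xy are <= 0; then
   (xyz)^2 = (xy)(yz)(zx) <= 0, so some coordinate vanishes.  The other two
   are then idempotent integers, i.e. 0 or 1, with product 0. *)

Lemma pairwise_mul_le0 (R : realDomainType) (x y z : R) :
  x * y <= 0 -> y * z <= 0 -> z * x <= 0 -> [\/ x = 0, y = 0 | z = 0].
Proof.
move=> xy yz zx.
have sqr_le0 : (x * y * z) ^+ 2 <= 0.
  have -> : (x * y * z) ^+ 2 = (x * y) * (y * z) * (z * x) by ring.
  by apply: mulr_ge0_le0 => //; apply: mulr_le0.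
have /eqP : x * y * z = 0.
  by apply/eqP; rewrite -sqrf_eq0 eq_le sqr_le0 sqr_ge0.
by rewrite !mulf_eq0 -orbA => /or3P[] /eqP; [constructor 1|constructor 2|constructor 3].
Qed.

Lemma int_le_sqr (x : int) : x <= x ^+ 2.
Proof. nia. Qed.

Lemma int_idem (x : int) : x ^+ 2 = x -> (x == 0) || (x == 1).
Proof.
by move=> idx; rewrite -[x == 1]subr_eq0 -mulf_eq0 mulrBr mulr1 -expr2 idx subrr.
Qed.

Lemma int_idempotent_coords (x y z : int) :
  x ^+ 2 + 2 * y * z = x -> y ^+ 2 + 2 * z * x = y -> z ^+ 2 + 2 * x * y = z ->
  (x, y, z) \in [:: (0, 0, 0); (1, 0, 0); (0, 1, 0); (0, 0, 1)].
Proof.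
move=> ex ey ez.
have nonpos (u v t : int) : u ^+ 2 + 2 * v * t = u -> v * t <= 0.
  by move=> eu; have := int_le_sqr u; lia.
have [x0|y0|z0] := pairwise_mul_le0 (nonpos _ _ _ ez) (nonpos _ _ _ ex) (nonpos _ _ _ ey);
  [move: ey ez ex; rewrite x0 | move: ex ez ey; rewrite y0 | move: ex ey ez; rewrite z0];
  rewrite !(mulr0, mul0r, addr0) => /int_idem/orP[]/eqP-> /int_idem/orP[]/eqP->;
  by rewrite ?(mulr0, mul0r, addr0).
Qed.

Definition r0 : R3 := @Ordinal 3 0 isT.
Definition r1 : R3 := @Ordinal 3 1 isT.
Definition r2 : R3 := @Ordinal 3 2 isT.

Lemma sum_R3 (V : nmodType) (F : R3 -> V) : \sum_i F i = F r0 + F r1 + F r2.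
Proof.
by rewrite !big_ord_recr big_ord0 /= add0r; congr (F _ + F _ + F _); apply: val_inj.
Qed.

Lemma ffun_R3_ext (T : Type) (u v : {ffun R3 -> T}) :
  u r0 = v r0 -> u r1 = v r1 -> u r2 = v r2 -> u = v.
Proof. by move=> e0 e1 e2; apply/ffunP => -[[|[|[|//]]] lt]; rewrite (bool_irrelevance lt isT). Qed.

Lemma sum_indicator (T : finType) (R : pzSemiRingType) (a : T) (F : T -> R) :
  \sum_t (t == a)%:R * F t = F a.
Proof. by rewrite (bigD1 a) //= eqxx mul1r big1 ?addr0 // => t /negbTE->; rewrite mul0r. Qed.

Lemma qmul_basis (i j : R3) : qmul (basis i) (basis j) = basis (r3op i j).
Proof.
apply/ffunP => k; rewrite ffunE.
under eq_bigr => i' _ do under eq_bigr => j' _ do rewrite !ffunE -mulrA.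
under eq_bigr do rewrite -mulr_sumr.
by rewrite !sum_indicator ffunE.
Qed.

Lemma r3op_val (i j : R3) : (r3op i j : nat) = ((2 * j + 2 * i) %% 3)%N.
Proof. by rewrite /r3op inordK ?ltn_pmod. Qed.

Lemma r3op_idem (i : R3) : r3op i i = i.
Proof. by apply/val_inj; rewrite /= r3op_val; case: i => [[|[|[|]]] ?]. Qed.

Lemma qmul_sqrE (w : ZR3) :
  [/\ qmul w w r0 = w r0 ^+ 2 + 2 * w r1 * w r2,
      qmul w w r1 = w r1 ^+ 2 + 2 * w r2 * w r0
    & qmul w w r2 = w r2 ^+ 2 + 2 * w r0 * w r1].
Proof. by split; rewrite ffunE !sum_R3 !ffunE -!val_eqE /= !r3op_val /r0 /r1 /r2 /=; ring. Qed.

Theorem proposition4p3 (w : ZR3) :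
  idempotentsR3 w <-> exists i : R3, w = basis i.
Proof.
split=> [[w_neq0 w_idem] | [i ->]].
- have [e0 e1 e2] := qmul_sqrE w; rewrite w_idem in e0 e1 e2.
  have := int_idempotent_coords (esym e0) (esym e1) (esym e2).
  rewrite !inE => /or4P[] /eqP[w0 w1 w2].
  + by case/eqP: w_neq0; apply: ffun_R3_ext; rewrite ffunE.
  + by exists r0; apply: ffun_R3_ext; rewrite ffunE.
  + by exists r1; apply: ffun_R3_ext; rewrite ffunE.
  + by exists r2; apply: ffun_R3_ext; rewrite ffunE.
- split; last by rewrite qmul_basis r3op_idem.
  by apply/eqP => /ffunP/(_ i); rewrite !ffunE eqxx.
Qed.
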